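(* Let $r\in\mathbb N_0$ and let $x_0,\dots,x_r\in\mathbb R$ satisfy: (i) $\sum_{i=0}^rx_i=0$; (ii) $x_{r-i}=x_i$ for all $0\le i\le r$; (iii) there is an integer $n$ such that $x_i\ge0$ for $0\le i\le n$ and $x_i<0$ for $n<i\le\lfloor r/2\rfloor$. Let $f_0,\dots,f_r\in\mathbb R$ satisfy $0\le f_1-f_0\le f_2-f_1\le\dots\le f_r-f_{r-1}$. Then $\sum_{i=0}^rf_ix_i\ge0$. *)

From mathcomp Require Import all_boot all_order all_algebra.

From mathcomp Require Import all_boot all_order all_algebra.
From mathcomp Require Import ring lra zify.
Import Order.TTheory GRing.Theory Num.Theory.
Local Open Scope ring_scope.

(** Summation by parts turns [\sum_i f i * x i] into [- \sum_(i < r) S (i+1) * d i],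
    with [S] the partial sums of [x] and [d i = f (i+1) - f i] nondecreasing.
    The symmetry of [x] and [\sum_i x i = 0] make [S] antisymmetric about the
    middle, [S (r+1-j) = - S j], and the sign pattern of [x] makes [S] nonnegative
    on the first half: [S] increases while [x >= 0], then decreases towards its
    middle value, which is [0] or [- x_mid / 2 > 0]. Pairing [i] with [r-1-i]
    then gives [2 \sum_(i < r) S (i+1) * d i = \sum_i S (i+1) * (d i - d (r-1-i)) <= 0]. *)

Definition psum {V : nmodType} (x : nat -> V) (k : nat) : V :=
  \sum_(0 <= i < k) x i.

Lemma psumS {V : nmodType} (x : nat -> V) k : psum x k.+1 = psum x k + x k.
Proof. by rewrite /psum big_nat_recr. Qed.

Lemma sum_by_parts (R : comPzRingType) (x f : nat -> R) k :
  \sum_(0 <= i < k) f i * x i =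
  f k * psum x k - \sum_(0 <= i < k) psum x i.+1 * (f i.+1 - f i).
Proof.
elim: k => [|k IHk]; first by rewrite /psum !big_geq // mulr0 subr0.
by rewrite !big_nat_recr //= IHk psumS; ring.
Qed.

Lemma psum_sym {V : nmodType} (x : nat -> V) r j :
    (forall i, (i <= r)%N -> x (r - i)%N = x i) -> (j <= r.+1)%N ->
  psum x r.+1 = psum x (r.+1 - j) + psum x j.
Proof.
move=> x_sym le_j_r1.
rewrite /psum (big_cat_nat _ (n := (r.+1 - j)%N)) ?leq_subr //=; congr (_ + _).
rewrite -{1}[(r.+1 - j)%N]add0n big_addn.
have -> : (r.+1 - (r.+1 - j) = j)%N by lia.
rewrite big_nat_rev; apply: eq_big_nat => i /andP[_ lt_i_j] /=.
have -> : (j - i.+1 + (r.+1 - j) = r - i)%N by lia.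
by apply: x_sym; lia.
Qed.

Lemma antisym_weighted_sum_le0 (R : realDomainType) (r : nat) (S d : nat -> R) :
    (forall j, (j <= r.+1)%N -> S (r.+1 - j)%N = - S j) ->
    (forall j, (j.*2 <= r.+1)%N -> 0 <= S j) ->
    {in gtn r &, {homo d : i j / (i <= j)%N >-> i <= j}} ->
  \sum_(0 <= i < r) S i.+1 * d i <= 0.
Proof.
move=> S_antisym S_ge0 d_homo.
set T := \sum_(0 <= i < r) _.
have T_rev : T = - \sum_(0 <= i < r) S i.+1 * d (r - i.+1)%N.
  rewrite /T big_nat_rev -sumrN; apply: eq_big_nat => i /andP[_ lt_i_r] /=.
  have -> : (0 + r - i.+1).+1 = (r.+1 - i.+1)%N by lia.
  by rewrite add0n S_antisym ?mulNr //; lia.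
suff : T + T <= 0 by rewrite -mulr2n pmulrn_lle0.
rewrite {2}T_rev -sumrB big_nat_cond.
apply: sumr_le0 => i /andP[/andP[_ lt_i_r] _]; rewrite -mulrBr.
have [first_half|second_half] := leqP (i.+1).*2 r.+1.
  apply: mulr_ge0_le0; first exact: S_ge0.
  by rewrite subr_le0 d_homo ?inE //; lia.
have -> : S i.+1 = - S (r - i)%N.
  by rewrite -S_antisym; [congr S; lia | lia].
rewrite mulNr oppr_le0; apply: mulr_ge0; first by apply: S_ge0; lia.
by rewrite subr_ge0 d_homo ?inE //; lia.
Qed.

Section SignPattern.
Context {R : realDomainType} {r : nat} {x : nat -> R} {n : int}.
Hypothesis x_sum0 : psum x r.+1 = 0.
Hypothesis x_sym : forall i, (i <= r)%N -> x (r - i)%N = x i.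
Hypothesis x_ge0 : forall i, (i <= r)%N -> i%:Z <= n -> 0 <= x i.
Hypothesis x_lt0 : forall i, n < i%:Z -> (i <= r./2)%N -> x i < 0.

Lemma psum_compl j : (j <= r.+1)%N -> psum x (r.+1 - j) = - psum x j.
Proof. by move=> le_j_r1; have := psum_sym x r j x_sym le_j_r1; rewrite x_sum0; lra. Qed.

Lemma psum_mid_ge0 : n < (r./2)%:Z -> 0 <= psum x (r - r./2).
Proof.
move=> lt_n_half; set m := (r - r./2)%N.
have le_m_r1 : (m <= r.+1)%N by lia.
have := psum_compl m le_m_r1; have := odd_double_half r.
case: (odd r) => /= r_eq.
  have -> : (r.+1 - m = m)%N by lia.
  by move=> /esym/eqP; rewrite eqNr => /eqP ->.
have -> : (r.+1 - m = m.+1)%N by lia.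
rewrite psumS.
have : x m < 0 by apply: x_lt0; lia.
lra.
Qed.

Lemma psum_ge0 j : (j.*2 <= r.+1)%N -> 0 <= psum x j.
Proof.
move=> first_half.
have [le_j_n1|lt_n1_j] := boolP (j%:Z <= n + 1).
  rewrite /psum big_nat_cond; apply: sumr_ge0 => i /andP[/andP[_ lt_i_j] _].
  by apply: x_ge0; lia.
have le_j_mid : (j <= r - r./2)%N by lia.
have -> : psum x j = psum x (r - r./2) - \sum_(j <= i < r - r./2) x i.
  by rewrite /psum (big_cat_nat (leq0n j) le_j_mid) addrK.
rewrite subr_ge0; apply: le_trans (psum_mid_ge0 _); last lia.
rewrite big_nat_cond; apply: sumr_le0 => i /andP[/andP[le_j_i lt_i_mid] _].
by apply/ltW/x_lt0; lia.
Qed.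

End SignPattern.

Theorem lemma10 (R : realFieldType) (r : nat) (x f : nat -> R) (n : int) :
  \sum_(0 <= i < r.+1) x i = 0 ->
  (forall i : nat, (i <= r)%N -> x (r - i)%N = x i) ->
  (forall i : nat, (i <= r)%N -> (i%:Z <= n) -> 0 <= x i) ->
  (forall i : nat, (n < i%:Z) -> (i <= r./2)%N -> x i < 0) ->
  ((1 <= r)%N -> 0 <= f 1%N - f 0%N) ->
  (forall i : nat, (1 <= i)%N -> (i.+1 <= r)%N -> f i - f i.-1 <= f i.+1 - f i) ->
  0 <= \sum_(0 <= i < r.+1) f i * x i.
Proof.
move=> x_sum0 x_sym x_ge0 x_lt0 _ f_convex.
have d_homo : {in gtn r &, {homo (fun i => f i.+1 - f i) : i j / (i <= j)%N >-> i <= j}}.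
  apply: homo_leq_in => [//||i j _ lt_j_r k /andP[_ lt_k_j]|i _ lt_i1_r].
  - exact: le_trans.
  - exact: ltn_trans lt_j_r.
  - exact: f_convex.
rewrite sum_by_parts big_nat_recr //= [psum x r.+1]x_sum0 mul0r mulr0 sub0r addr0.
rewrite oppr_ge0 antisym_weighted_sum_le0 // => j.
- exact: psum_compl x_sum0 x_sym j.
- exact: psum_ge0 x_sum0 x_sym x_ge0 x_lt0 j.
Qed.
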